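(* Let $\sigma>\sqrt{2}/3$ and define $F(x)=-x^3-3\sigma^2x$ and $G(x)=\sqrt{15\sigma^6+36\sigma^4x^2+9\sigma^2x^4}$. Fix any timestep $\Delta t>0$ and let $$P(\xi\mid x)=\frac{1}{G(x)\sqrt{2\pi\Delta t}}\exp\!\left(\frac{-[\xi-x-F(x)\Delta t]^2}{2G(x)^2\Delta t}\right).$$ Then there is no probability density $\rho^*$ on $\mathbb{R}$ satisfying $\rho^*(\xi)=\int_{-\infty}^{\infty}P(\xi\mid x)\rho^*(x)\,dx$ for all $\xi$ and having finite second raw moment $\int_{-\infty}^{\infty}x^2\rho^*(x)\,dx<\infty$. That is, every such equilibrium density has divergent second moment.
   Context: The functions $F,G$ are the drift and diffusion coefficients of the Itô SDE $dx=(-x^3-3\sigma^2x)\,dt+\sqrt{15\sigma^6+36\sigma^4x^2+9\sigma^2x^4}\,dW$ with noise parameter $\sigma>0$. $P(\xi\mid x)$ is the one-step transition density of its Euler–Maruyama discretization $\xi=x+F(x)\Delta t+G(x)\eta\sqrt{\Delta t}$, $\eta\sim N(0,1)$; an equilibrium is a probability density invariant under this step. *)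

From HB Require Import structures.
From mathcomp Require Import all_boot all_order all_algebra.
From mathcomp Require Import all_classical all_reals all_analysis.
Set Implicit Arguments. Unset Strict Implicit. Unset Printing Implicit Defensive.
Import Order.TTheory GRing.Theory Num.Theory.
Local Open Scope ring_scope.

Definition driftF {R : realType} (sigma x : R) : R :=
  - x ^+ 3 - 3 * sigma ^+ 2 * x.

Definition diffG {R : realType} (sigma x : R) : R :=
  Num.sqrt (15 * sigma ^+ 6 + 36 * sigma ^+ 4 * x ^+ 2 + 9 * sigma ^+ 2 * x ^+ 4).

Definition transP {R : realType} (sigma dt xi x : R) : R :=
  (diffG sigma x * Num.sqrt (2 * pi * dt))^-1 *
  expR (- (xi - x - driftF sigma x * dt) ^+ 2 / (2 * diffG sigma x ^+ 2 * dt)).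

Definition is_prob_density {R : realType} (rho : R -> R) : Prop :=
  measurable_fun setT rho /\ (forall x, 0 <= rho x) /\
  (\int[lebesgue_measure]_x (rho x)%:E = 1)%E.

Definition is_equilibrium {R : realType} (sigma dt : R) (rho : R -> R) : Prop :=
  forall xi : R,
    ((rho xi)%:E = \int[lebesgue_measure]_x (transP sigma dt xi x * rho x)%:E)%E.

Definition finite_second_moment {R : realType} (rho : R -> R) : Prop :=
  (\int[lebesgue_measure]_x (x ^+ 2 * rho x)%:E < +oo)%E.

(* A Lyapunov argument with V(x) = x^2.  From x, one Euler-Maruyama step is
   Gaussian with mean x + F(x) dt and variance G(x)^2 dt, so its second moment is
     (x + F dt)^2 + G^2 dt
       = x^2 + 15 sigma^6 dt
         + dt ((9 sigma^2 - 2) x^4 + 6 sigma^2 (6 sigma^2 - 1) x^2) + (F dt)^2,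
   which exceeds x^2 by at least 15 sigma^6 dt once 9 sigma^2 > 2.  Integrating
   against an equilibrium density and exchanging the integrals (Tonelli) gives
   M >= M + 15 sigma^6 dt for its second moment M, hence M = +oo.
   The Gaussian bound E[X^2] >= m^2 + s^2 for X ~ N(m, s^2) is obtained from
   e^y >= 1 + y applied to the density ratio of N(t^2 m, t^2 s^2) and N(m, s^2),
   which only involves total masses, and letting t -> 1. *)

From mathcomp Require Import all_boot all_order all_algebra.
From mathcomp Require Import all_classical all_reals all_analysis.
From mathcomp Require Import ring lra measurable_realfun.
Import Order.TTheory GRing.Theory Num.Theory.
Local Open Scope ring_scope.

Lemma measurable_funV_gt0 d (T : measurableType d) (R : realType) (f : T -> R) :
  measurable_fun setT f -> (forall x, 0 < f x) ->
  measurable_fun setT (fun x => (f x)^-1).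
Proof.
move=> mf f_gt0.
rewrite (_ : (fun x => _) = expR \o (fun x => - ln (f x))); last first.
  by apply/funext => x /=; rewrite expRN lnK// posrE.
apply: measurableT_comp; first exact: measurable_expR.
by apply: measurable_funN; apply: measurableT_comp mf; exact: measurable_ln.
Qed.

Section normal_second_moment.
Context {R : realType}.
Notation mu := (@lebesgue_measure R).
Implicit Types m s t x : R.

Lemma normal_peakZ t s : 0 < t -> normal_peak (t * s) = t^-1 * normal_peak s.
Proof.
move=> t0; rewrite /normal_peak exprMn -mulrA -mulrnAr sqrtrM ?sqr_ge0//.
by rewrite sqrtr_sqr gtr0_norm// invfM.
Qed.

Lemma integral_normal_pdfZ c m s :
  (\int[mu]_x (c * normal_pdf m s x)%:E = c%:E)%E.
Proof.
under eq_integral do rewrite EFinM.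
by rewrite integralZl ?integral_normal_pdf ?mule1//; exact: integrable_normal_pdf.
Qed.

Lemma measurable_sqr_normal_pdf m s :
  measurable_fun setT (fun x => x ^+ 2 * normal_pdf m s x).
Proof. by apply: measurable_funM => //; exact: measurable_normal_pdf. Qed.

(* The exponent has no term linear in [x], so the comparison never involves
   the first moment. *)
Lemma normal_pdf_shrink m s t x : s != 0 -> 0 < t ->
  t * normal_pdf (t ^+ 2 * m) (t * s) x =
  normal_pdf m s x *
    expR ((1 - t ^+ 2) * (m ^+ 2 - x ^+ 2 / t ^+ 2) / (s ^+ 2 *+ 2)).
Proof.
move=> s0 t0; have ts0 : t * s != 0 by rewrite mulf_neq0 // gt_eqF.
rewrite !normal_pdfE//= normal_peakZ// mulrA mulrA mulfV ?gt_eqF// mul1r.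
rewrite /normal_fun -[RHS]mulrA -expRD; congr (_ * expR _).
by field; rewrite s0 gt_eqF.
Qed.

Lemma normal_pdf_shrink_ge m s t x : s != 0 -> 0 < t ->
  (2 * t ^+ 2 * s ^+ 2 + t ^+ 2 * (1 - t ^+ 2) * m ^+ 2) * normal_pdf m s x <=
  2 * t ^+ 3 * s ^+ 2 * normal_pdf (t ^+ 2 * m) (t * s) x +
  (1 - t ^+ 2) * (x ^+ 2 * normal_pdf m s x).
Proof.
move=> s0 t0.
set p := normal_pdf m s x; set q := normal_pdf (t ^+ 2 * m) (t * s) x.
set y := (1 - t ^+ 2) * (m ^+ 2 - x ^+ 2 / t ^+ 2) / (s ^+ 2 *+ 2).
have tangent : p * (1 + y) <= t * q.
  by rewrite /q normal_pdf_shrink// ler_wpM2l ?normal_pdf_ge0// expR_ge1Dx.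
have expand : (2 * t ^+ 2 * s ^+ 2 + t ^+ 2 * (1 - t ^+ 2) * m ^+ 2) * p -
    (1 - t ^+ 2) * (x ^+ 2 * p) = 2 * t ^+ 2 * s ^+ 2 * (p * (1 + y)).
  by rewrite /y; field; apply/andP; split; rewrite // gt_eqF.
rewrite -lerBlDr expand (_ : 2 * t ^+ 3 * s ^+ 2 * q = 2 * t ^+ 2 * s ^+ 2 * (t * q)).
  by apply: ler_wpM2l => //; apply: mulr_ge0; [apply: mulr_ge0|]; rewrite ?sqr_ge0.
by ring.
Qed.

Lemma normal_pdf_shrink_integral_ge m s t : s != 0 -> 0 < t -> t <= 1 ->
  ((2 * t ^+ 2 * s ^+ 2 + t ^+ 2 * (1 - t ^+ 2) * m ^+ 2)%:E <=
   (2 * t ^+ 3 * s ^+ 2)%:E +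
   (1 - t ^+ 2)%:E * \int[mu]_x (x ^+ 2 * normal_pdf m s x)%:E)%E.
Proof.
move=> s0 t0 t1.
have u0 : 0 <= 1 - t ^+ 2 by rewrite subr_ge0 exprn_ile1 // ltW.
have c0 : 0 <= 2 * t ^+ 2 * s ^+ 2 + t ^+ 2 * (1 - t ^+ 2) * m ^+ 2.
  have := mulr_ge0 (sqr_ge0 t) (sqr_ge0 s).
  have := mulr_ge0 (mulr_ge0 (sqr_ge0 t) u0) (sqr_ge0 m).
  nra.
have c'0 : 0 <= 2 * t ^+ 3 * s ^+ 2.
  by rewrite -mulrA mulr_ge0 // mulr_ge0 ?sqr_ge0 // exprn_ge0 // ltW.
have mx2 := measurable_sqr_normal_pdf m s.
have x2p_ge0 x : 0 <= x ^+ 2 * normal_pdf m s x.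
  exact: mulr_ge0 (sqr_ge0 x) (normal_pdf_ge0 m s x).
rewrite -(integral_normal_pdfZ _ m s).
rewrite -(integral_normal_pdfZ _ (t ^+ 2 * m) (t * s)).
rewrite -ge0_integralZl//=; last 2 first.
- exact/measurable_EFinP.
- by move=> x _; rewrite lee_fin.
under [X in (_ + X)%E]eq_integral do rewrite -EFinM.
rewrite -ge0_integralD//=; last 4 first.
- by move=> x _; rewrite lee_fin mulr_ge0 ?normal_pdf_ge0.
- by apply/measurable_EFinP/measurable_funM => //; exact: measurable_normal_pdf.
- by move=> x _; rewrite lee_fin mulr_ge0.
- by apply/measurable_EFinP/measurable_funM.
under [X in (_ <= X)%E]eq_integral do rewrite -EFinD.
apply: ge0_le_integral => //=.
- by move=> x _; rewrite lee_fin mulr_ge0 ?normal_pdf_ge0.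
- by apply/measurable_EFinP/measurable_funM => //; exact: measurable_normal_pdf.
- apply/measurable_EFinP/measurable_funD; last exact: measurable_funM.
  by apply: measurable_funM => //; exact: measurable_normal_pdf.
by move=> x _; rewrite lee_fin normal_pdf_shrink_ge.
Qed.

Lemma normal_pdf_second_moment_ge m s : s != 0 ->
  ((m ^+ 2 + s ^+ 2)%:E <= \int[mu]_x (x ^+ 2 * normal_pdf m s x)%:E)%E.
Proof.
move=> s0; apply/lee_mul01Pr; first by rewrite lee_fin addr_ge0 ?sqr_ge0.
move=> r /andP[r0 r1].
have [t [t0 t1 <-]] : exists t, [/\ 0 < t, t < 1 & t ^+ 2 = r].
  by exists (Num.sqrt r); rewrite sqrtr_gt0 -sqrtr1 ltr_sqrt// sqr_sqrtr// ltW.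
have := normal_pdf_shrink_integral_ge m s t s0 t0 (ltW t1).
have : (0 <= \int[mu]_x (x ^+ 2 * normal_pdf m s x)%:E)%E.
  by apply: integral_ge0 => x _; rewrite lee_fin mulr_ge0 ?sqr_ge0 ?normal_pdf_ge0.
case: (\int[mu]_x _)%E => [X _| _ _|//]; last exact: leey.
rewrite -EFinM -EFinD -!EFinM !lee_fin => shrink.
have u0 : 0 < 1 - t ^+ 2 by rewrite subr_gt0 expr_lt1// ltW.
rewrite -(ler_pM2l u0).
have := mulr_ge0 (mulr_ge0 (sqr_ge0 t) (sqr_ge0 s)) (sqr_ge0 (1 - t)).
nra.
Qed.
End normal_second_moment.

Section drift_criterion.
Context {d} {T : measurableType d} {R : realType}.
Variable mu : {sigma_finite_measure set T -> \bar R}.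
Context {P : T -> T -> R} {V : T -> R} {K : R}.
Hypothesis mP : measurable_fun setT (fun p : T * T => P p.1 p.2).
Hypothesis P_ge0 : forall xi x, 0 <= P xi x.
Hypothesis mV : measurable_fun setT V.
Hypothesis V_ge0 : forall x, 0 <= V x.
Hypothesis K_gt0 : 0 < K.
Hypothesis drift :
  forall x, ((V x + K)%:E <= \int[mu]_xi (V xi * P xi x)%:E)%E.

Lemma invariant_density_moment_ge (rho : T -> R) :
  measurable_fun setT rho -> (forall x, 0 <= rho x) ->
  (\int[mu]_x (rho x)%:E = 1)%E ->
  (forall xi, (rho xi)%:E = (\int[mu]_x (P xi x * rho x)%:E)%E) ->
  (\int[mu]_x (V x * rho x)%:E + K%:E <= \int[mu]_x (V x * rho x)%:E)%E.
Proof.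
move=> mrho rho_ge0 rho1 rho_inv.
pose f (p : T * T) := (V p.1 * (P p.1 p.2 * rho p.2))%:E.
have mf : measurable_fun setT f.
  apply/measurable_EFinP/measurable_funM; first exact: measurableT_comp mV _.
  by apply: measurable_funM => //; exact: measurableT_comp mrho _.
have f_ge0 p : (0 <= f p)%E by rewrite lee_fin !mulr_ge0.
have mVrho : measurable_fun setT (fun x => (V x * rho x)%:E).
  exact/measurable_EFinP/measurable_funM.
have mP2 x : measurable_fun setT (P ^~ x).
  exact: measurable_fun_pair1 x mP.
set M := (\int[mu]_x (V x * rho x)%:E)%E.
have M_tonelli : M = (\int[mu]_x \int[mu]_xi f (xi, x))%E.
  rewrite -fubini_tonelli//; apply: eq_integral => xi _.
  rewrite EFinM rho_inv -ge0_integralZl//=.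
  - by apply/measurable_EFinP/measurable_funM => //; exact: measurable_fun_pair2 xi mP.
  - by move=> x _; rewrite lee_fin mulr_ge0.
  - by rewrite lee_fin.
have K_mass : (\int[mu]_x (K * rho x)%:E = K%:E)%E.
  under eq_integral do rewrite EFinM.
  rewrite ge0_integralZl//= ?rho1 ?mule1//; last by rewrite lee_fin ltW.
  - exact/measurable_EFinP.
  - by move=> x _; rewrite lee_fin.
have M_shift : (M + K%:E = \int[mu]_x ((V x + K) * rho x)%:E)%E.
  under eq_integral do rewrite mulrDl EFinD.
  rewrite ge0_integralD//= ?K_mass//.
  - by move=> x _; rewrite lee_fin mulr_ge0.
  - by move=> x _; rewrite lee_fin mulr_ge0// ltW.
  - exact/measurable_EFinP/measurable_funM.
rewrite {2}M_tonelli M_shift; apply: ge0_le_integral => //=.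
- by move=> x _; rewrite lee_fin mulr_ge0// addr_ge0// ltW.
- by apply/measurable_EFinP/measurable_funM => //; exact: measurable_funD.
- exact: measurable_fun_fubini_tonelli_G.
move=> x _; rewrite /f /=; under eq_integral do rewrite mulrA EFinM.
rewrite ge0_integralZr//=.
- by rewrite EFinM lee_wpmul2r ?lee_fin.
- by apply/measurable_EFinP/measurable_funM.
- by move=> xi _; rewrite lee_fin mulr_ge0.
- by rewrite lee_fin.
Qed.

Lemma invariant_density_moment_infty (rho : T -> R) :
  measurable_fun setT rho -> (forall x, 0 <= rho x) ->
  (\int[mu]_x (rho x)%:E = 1)%E ->
  (forall xi, (rho xi)%:E = (\int[mu]_x (P xi x * rho x)%:E)%E) ->
  (\int[mu]_x (V x * rho x)%:E = +oo)%E.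
Proof.
move=> mrho rho_ge0 rho1 rho_inv.
have := @invariant_density_moment_ge rho mrho rho_ge0 rho1 rho_inv.
have : (0 <= \int[mu]_x (V x * rho x)%:E)%E.
  by apply: integral_ge0 => x _; rewrite lee_fin mulr_ge0.
case: (\int[mu]_x _)%E => [M _|//|//].
by rewrite -EFinD lee_fin gerDl leNgt K_gt0.
Qed.
End drift_criterion.

Section euler_maruyama.
Context {R : realType} {sigma dt : R}.
Hypotheses (sigma_neq0 : sigma != 0) (dt_gt0 : 0 < dt).
Implicit Types x xi : R.

Lemma diffG_sqr x :
  diffG sigma x ^+ 2 =
  15 * sigma ^+ 6 + 36 * sigma ^+ 4 * x ^+ 2 + 9 * sigma ^+ 2 * x ^+ 4.
Proof.
have s6 : 0 <= sigma ^+ 6 by rewrite exprn_even_ge0.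
have s4x2 : 0 <= sigma ^+ 4 * x ^+ 2 by rewrite mulr_ge0 ?exprn_even_ge0.
have s2x4 : 0 <= sigma ^+ 2 * x ^+ 4 by rewrite mulr_ge0 ?exprn_even_ge0.
by rewrite sqr_sqrtr//; lra.
Qed.

Lemma diffG_gt0 x : 0 < diffG sigma x.
Proof.
rewrite sqrtr_gt0.
have s6 : 0 < sigma ^+ 6 by rewrite exprn_even_gt0.
have s4x2 : 0 <= sigma ^+ 4 * x ^+ 2 by rewrite mulr_ge0 ?exprn_even_ge0.
have s2x4 : 0 <= sigma ^+ 2 * x ^+ 4 by rewrite mulr_ge0 ?exprn_even_ge0.
lra.
Qed.

Lemma transP_normal_pdf xi x :
  transP sigma dt xi x =
  normal_pdf (x + driftF sigma x * dt) (diffG sigma x * Num.sqrt dt) xi.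
Proof.
have G0 := diffG_gt0 x.
have Gdt0 : 0 < diffG sigma x * Num.sqrt dt.
  by rewrite mulr_gt0 // sqrtr_gt0.
rewrite normal_pdfE ?gt_eqF//= /transP /normal_peak /normal_fun.
rewrite exprMn (sqr_sqrtr (ltW dt_gt0)); congr (_^-1 * expR _).
  rewrite (_ : diffG sigma x ^+ 2 * dt * pi *+ 2 =
                 diffG sigma x ^+ 2 * (2 * pi * dt)); last by rewrite -mulr_natr; ring.
  by rewrite (sqrtrM _ (sqr_ge0 _)) sqrtr_sqr gtr0_norm.
by rewrite -mulr_natr; congr (- _ / _); ring.
Qed.

Lemma measurable_diffG : measurable_fun setT (diffG sigma).
Proof.
rewrite /diffG; apply: (@measurableT_comp _ _ _ _ _ _ (@Num.sqrt R)).
  by apply: continuous_measurable_fun => y; exact: sqrt_continuous.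
by apply: measurable_funD; [apply: measurable_funD|]; apply: measurable_funM.
Qed.

Lemma measurable_driftF : measurable_fun setT (driftF sigma).
Proof. by apply: measurable_funB; [exact: measurable_funN|exact: measurable_funM]. Qed.

Lemma measurable_transP :
  measurable_fun setT (fun p : R * R => transP sigma dt p.1 p.2).
Proof.
have mG : measurable_fun setT (fun p : R * R => diffG sigma p.2).
  exact: measurableT_comp measurable_diffG measurable_snd.
have mF : measurable_fun setT (fun p : R * R => driftF sigma p.2).
  exact: measurableT_comp measurable_driftF measurable_snd.
have G_gt0 (p : R * R) : 0 < diffG sigma p.2 := diffG_gt0 p.2.
apply: measurable_funM.
  apply: measurable_funV_gt0; first exact: measurable_funM.
  by move=> p; rewrite mulr_gt0 // sqrtr_gt0 !mulr_gt0 ?pi_gt0.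
apply: measurableT_comp; first exact: measurable_expR.
apply: measurable_funM.
  apply/measurable_funN/measurable_funX/measurable_funB; last exact: measurable_funM.
  exact: measurable_funB measurable_fst measurable_snd.
apply: measurable_funV_gt0.
  by apply: measurable_funM => //; apply: measurable_funM => //; exact: measurable_funX.
by move=> p; rewrite mulr_gt0 // mulr_gt0 // exprn_gt0.
Qed.

Lemma transP_ge0 xi x : 0 <= transP sigma dt xi x.
Proof. by rewrite transP_normal_pdf normal_pdf_ge0. Qed.

Lemma drift_diffusion_moment_ge x : 2 < 9 * sigma ^+ 2 ->
  x ^+ 2 + 15 * sigma ^+ 6 * dt <=
  (x + driftF sigma x * dt) ^+ 2 + diffG sigma x ^+ 2 * dt.
Proof.
move=> noise.
have -> : (x + driftF sigma x * dt) ^+ 2 + diffG sigma x ^+ 2 * dt =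
    x ^+ 2 + 15 * sigma ^+ 6 * dt +
    (dt * ((9 * sigma ^+ 2 - 2) * x ^+ 4 +
           6 * sigma ^+ 2 * (6 * sigma ^+ 2 - 1) * x ^+ 2) +
     (driftF sigma x * dt) ^+ 2).
  by rewrite diffG_sqr /driftF; ring.
have quartic : 0 <= (9 * sigma ^+ 2 - 2) * x ^+ 4.
  by rewrite mulr_ge0 ?exprn_even_ge0// subr_ge0 ltW.
have quadratic : 0 <= 6 * sigma ^+ 2 * (6 * sigma ^+ 2 - 1) * x ^+ 2.
  have := sqr_ge0 sigma; have := sqr_ge0 x; nra.
rewrite lerDl addr_ge0 ?sqr_ge0//.
exact: mulr_ge0 (ltW dt_gt0) (addr_ge0 quartic quadratic).
Qed.

Lemma transP_second_moment_ge x : 2 < 9 * sigma ^+ 2 ->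
  ((x ^+ 2 + 15 * sigma ^+ 6 * dt)%:E <=
   \int[lebesgue_measure]_xi (xi ^+ 2 * transP sigma dt xi x)%:E)%E.
Proof.
move=> noise.
have Gdt0 : diffG sigma x * Num.sqrt dt != 0.
  by rewrite mulf_neq0 ?gt_eqF ?diffG_gt0// sqrtr_gt0.
under eq_integral do rewrite transP_normal_pdf.
apply: le_trans _ (normal_pdf_second_moment_ge _ _ Gdt0).
rewrite lee_fin exprMn (sqr_sqrtr (ltW dt_gt0)).
exact: drift_diffusion_moment_ge.
Qed.
End euler_maruyama.

Lemma sqrt2_div3_lt {R : rcfType} (sigma : R) :
  Num.sqrt 2 / 3 < sigma -> 0 < sigma /\ 2 < 9 * sigma ^+ 2.
Proof.
move=> lt_sigma.
have sqrt2_ge0 : 0 <= Num.sqrt 2 :> R := sqrtr_ge0 2.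
have sqrt2_sqr : Num.sqrt 2 ^+ 2 = 2 :> R by rewrite sqr_sqrtr.
have sigma_gt0 : 0 < sigma by apply: le_lt_trans lt_sigma; rewrite divr_ge0.
split=> //.
have : Num.sqrt 2 < 3 * sigma by rewrite -ltr_pdivrMl// mulrC.
nra.
Qed.

Theorem mainTheorem2 (R : realType) (sigma dt : R) :
  Num.sqrt 2 / 3 < sigma -> 0 < dt ->
  ~ (exists rho : R -> R,
       is_prob_density rho /\ is_equilibrium sigma dt rho /\
       finite_second_moment rho).
Proof.
move=> lt_sigma dt0 [rho [[mrho [rho_ge0 rho1]] [rho_inv]]].
have [sigma_gt0 noise] := sqrt2_div3_lt sigma lt_sigma.
have s0 : sigma != 0 by rewrite gt_eqF.
have K_gt0 : 0 < 15 * sigma ^+ 6 * dt by rewrite !mulr_gt0// exprn_gt0.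
have := invariant_density_moment_infty lebesgue_measure
  (measurable_transP s0 dt0) (transP_ge0 s0 dt0) (exprn_measurable 2) (@sqr_ge0 R)
  K_gt0 (fun x => transP_second_moment_ge s0 dt0 x noise)
  rho mrho rho_ge0 rho1 rho_inv.
by rewrite /finite_second_moment => ->; rewrite ltxx.
Qed.
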